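(* Let $n\ge1$, $m=\lfloor n/2\rfloor$, $\rho\in(0,1)$, $j\in\mathbb Z$, and let $k\le l$ be integers. If $Z^{j}_m[l]_n\le Z^{\rho,1}_m[k]_n$, then $$L_j[l]_n-L_j[k]_n\le L^{\rho,1}_m[l]_n-L^{\rho,1}_m[k]_n.$$ If $Z^{\rho,1}_m[l]_n\le Z^{j}_m[k]_n$, then $$L^{\rho,1}_m[l]_n-L^{\rho,1}_m[k]_n\le L_j[l]_n-L_j[k]_n.$$
   Context: Let $\omega=\{\omega_{i,j}:(i,j)\in\mathbb Z^2,\ i+j>0\}$ be i.i.d. exponential random variables with parameter $1$. Write $(i,j)\le(k,l)$ if $i\le k$ and $j\le l$. An up-right path from $\mathbf x$ to $\mathbf y$ is a sequence $\mathbf x=\mathbf x_0,\dots,\mathbf x_m=\mathbf y$ with increments in $\{(1,0),(0,1)\}$; its passage time is $\sum_{i=1}^m\omega_{\mathbf x_i}$ (starting point excluded). For $\mathbf x=(i,j)\le\mathbf y$ with $i+j\ge0$, $L(\mathbf x,\mathbf y)$ is the maximal passage time over up-right paths, and the geodesic from $\mathbf x$ to $\mathbf y$ is the (a.s. unique) path attaining it. For integer $k$, $[k]_n:=(n+k,n-k)$ and $L_k(\mathbf x):=L([k]_0,\mathbf x)$. For $\rho\in(0,1)$, let $\mathrm s^1_\rho$ be a stationary profile independent of $\omega$: $\mathrm s^1_\rho(0)=0$, $\mathrm s^1_\rho(k)=\sum_{i=1}^k\zeta_i$ ($k>0$), $\mathrm s^1_\rho(k)=-\sum_{i=k+1}^0\zeta_i$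 ($k<0$), with $\zeta_i$ i.i.d. copies of $E_1-E_2$, $E_1,E_2$ independent exponentials of rates $1-\rho$ and $\rho$. Define $L^{\rho,1}_m[k]_n:=\max\{\mathrm s^1_\rho(i)+L([i]_m,[k]_n): i\in\mathbb Z,\ [i]_m\le[k]_n\}$ and let $Z^{\rho,1}_m[k]_n$ be the largest maximizing $i$. For $j$ with $[j]_0\le[k]_n$, let $Z^j_m[k]_n$ be the integer $z$ such that $[z]_m$ is the point where the geodesic from $[j]_0$ to $[k]_n$ meets the anti-diagonal $\{(m+i,m-i):i\in\mathbb Z\}$. *)

From Stdlib Require Import Reals ZArith List Bool.
Import ListNotations.
Open Scope R_scope.

Definition pt := (Z * Z)%type.

(* [k]_n := (n+k, n-k) *)
Definition diag (n k : Z) : pt := ((n + k)%Z, (n - k)%Z).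

Definition le_pt (x y : pt) : Prop := (fst x <= fst y)%Z /\ (snd x <= snd y)%Z.
Definition le_ptb (x y : pt) : bool := (Z.leb (fst x) (fst y) && Z.leb (snd x) (snd y))%bool.
Definition pt_eqb (x y : pt) : bool := (Z.eqb (fst x) (fst y) && Z.eqb (snd x) (snd y))%bool.

(* An up-right path from x is encoded by its sequence of increments:
   true = (1,0), false = (0,1). *)
Definition step (p : pt) (b : bool) : pt :=
  if b then ((fst p + 1)%Z, snd p) else (fst p, (snd p + 1)%Z).

Fixpoint pts (p : pt) (bs : list bool) : list pt :=
  match bs with
  | [] => []
  | b :: bs' => step p b :: pts (step p b) bs'
  end.

Fixpoint endp (p : pt) (bs : list bool) : pt :=
  match bs with
  | [] => p
  | b :: bs' => endp (step p b) bs'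
  end.

(* passage time: sum of the weights of x_1..x_m (starting point excluded) *)
Definition weight (w : Z -> Z -> R) (p : pt) (bs : list bool) : R :=
  fold_right Rplus 0 (map (fun q => w (fst q) (snd q)) (pts p bs)).

Fixpoint all_bl (n : nat) : list (list bool) :=
  match n with
  | O => [[]]
  | S n' => map (cons true) (all_bl n') ++ map (cons false) (all_bl n')
  end.

(* all up-right paths from x to y (each has exactly (y1-x1)+(y2-x2) steps) *)
Definition up_right_paths (x y : pt) : list (list bool) :=
  filter (fun bs => pt_eqb (endp x bs) y)
         (all_bl (Z.to_nat ((fst y - fst x) + (snd y - snd x)))).

Definition list_max (l : list R) : R :=
  match l with [] => 0 | a :: l' => fold_right Rmax a l' end.

Definition list_maxZ (l : list Z) : Z :=
  match l with [] => 0%Z | a :: l' => fold_right Z.max a l' end.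

Definition L (w : Z -> Z -> R) (x y : pt) : R :=
  list_max (map (weight w x) (up_right_paths x y)).

Definition is_geodesic (w : Z -> Z -> R) (x y : pt) (bs : list bool) : Prop :=
  endp x bs = y /\ weight w x bs = L w x y.

Definition Lj (w : Z -> Z -> R) (j : Z) (x : pt) : R := L w (diag 0 j) x.

Definition zrange (a b : Z) : list Z :=
  map (fun t => (a + Z.of_nat t)%Z) (seq 0 (Z.to_nat (b - a + 1))).

(* the integers i with [i]_m <= [k]_n (all lie in k-(n-m) .. k+(n-m)) *)
Definition feasible (m n k : Z) : list Z :=
  filter (fun i => le_ptb (diag m i) (diag n k))
         (zrange (k - (n - m))%Z (k + (n - m))%Z).

Definition Rrho_val (w : Z -> Z -> R) (s : Z -> R) (m n k i : Z) : R :=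
  s i + L w (diag m i) (diag n k).

(* L^{rho,1}_m[k]_n = max { s(i) + L([i]_m,[k]_n) : [i]_m <= [k]_n } *)
Definition Lrho (w : Z -> Z -> R) (s : Z -> R) (m n k : Z) : R :=
  list_max (map (Rrho_val w s m n k) (feasible m n k)).

Definition Reqb (a b : R) : bool := if Req_EM_T a b then true else false.

(* Z^{rho,1}_m[k]_n : the largest maximizing i *)
Definition Zrho (w : Z -> Z -> R) (s : Z -> R) (m n k : Z) : Z :=
  list_maxZ (filter (fun i => Reqb (Rrho_val w s m n k i) (Lrho w s m n k))
                    (feasible m n k)).

(* Both inequalities come from the crossing argument of last-passage percolation.
   Let i be the maximizer Z^{rho,1}_m at one endpoint, so that L^{rho,1}_m equals
   s(i) + L([i]_m, .) there and is at least s(i) + L([i]_m, .) at the other endpoint.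
   The hypothesis on the exit points forces the geodesic from [j]_0 and a geodesic
   from [i]_m to start on the antidiagonal of level 2m in one order and to end on
   the antidiagonal of level 2n in the opposite order, so they share a vertex v.
   Exchanging their tails at v gives the quadrangle inequality
   L(x,y) + L(x',y') <= L(x,y') + L(x',y), which compares the increments of L_j and
   of L([i]_m, .) between [k]_n and [l]_n; since [i]_m <= v, the point [i]_m is
   admissible at both endpoints and the bound on L^{rho,1}_m follows. *)
From Stdlib Require Import Reals ZArith List Lia Lra Bool.
Import ListNotations.
Open Scope R_scope.

Definition level (p : pt) : Z := (fst p + snd p)%Z.

Definition passes_through (x : pt) (bs : list bool) (v : pt) : Prop :=
  exists bs1 bs2, bs = bs1 ++ bs2 /\ endp x bs1 = v.

Lemma endp_app x bs1 bs2 : endp x (bs1 ++ bs2) = endp (endp x bs1) bs2.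
Proof. revert x; induction bs1; intros x; simpl; auto. Qed.

Lemma weight_app w x bs1 bs2 :
  weight w x (bs1 ++ bs2) = weight w x bs1 + weight w (endp x bs1) bs2.
Proof.
  revert x; induction bs1 as [|b bs1 IH]; intros x; unfold weight in *; simpl.
  - ring.
  - rewrite IH. ring.
Qed.

Lemma level_endp x bs : level (endp x bs) = (level x + Z.of_nat (length bs))%Z.
Proof.
  revert x; induction bs as [|b bs IH]; intros x; simpl.
  - lia.
  - rewrite IH. unfold level; destruct b; simpl; lia.
Qed.

Lemma le_pt_trans x y z : le_pt x y -> le_pt y z -> le_pt x z.
Proof. unfold le_pt; lia. Qed.

Lemma le_pt_endp x bs : le_pt x (endp x bs).
Proof.
  revert x; induction bs as [|b bs IH]; intros x; simpl.
  - unfold le_pt; lia.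
  - specialize (IH (step x b)). unfold le_pt in *. destruct b; simpl in *; lia.
Qed.

Lemma endp_repeat_true n x : endp x (repeat true n) = ((fst x + Z.of_nat n)%Z, snd x).
Proof.
  revert x; induction n as [|n IH]; intros [x1 x2]; simpl.
  - f_equal; lia.
  - rewrite IH. simpl. f_equal; lia.
Qed.

Lemma endp_repeat_false n x : endp x (repeat false n) = (fst x, (snd x + Z.of_nat n)%Z).
Proof.
  revert x; induction n as [|n IH]; intros [x1 x2]; simpl.
  - f_equal; lia.
  - rewrite IH. simpl. f_equal; lia.
Qed.

Lemma up_right_path_exists x y : le_pt x y -> exists bs, endp x bs = y.
Proof.
  intros [H1 H2].
  exists (repeat true (Z.to_nat (fst y - fst x)) ++ repeat false (Z.to_nat (snd y - snd x))).
  rewrite endp_app, endp_repeat_true, endp_repeat_false.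
  destruct y as [y1 y2]; simpl in *. f_equal; lia.
Qed.

Lemma passes_through_start x bs : passes_through x bs x.
Proof. exists [], bs. auto. Qed.

Lemma passes_through_app x bs1 bs2 v :
  passes_through (endp x bs1) bs2 v -> passes_through x (bs1 ++ bs2) v.
Proof.
  intros (c1 & c2 & -> & Hv). exists (bs1 ++ c1), c2.
  rewrite app_assoc, endp_app. auto.
Qed.

Lemma in_pts_passes_through x bs v : In v (x :: pts x bs) -> passes_through x bs v.
Proof.
  revert x; induction bs as [|b bs IH]; intros x [Hv|Hv]; subst.
  - apply passes_through_start.
  - destruct Hv.
  - apply passes_through_start.
  - apply (passes_through_app x [b]). apply IH. simpl; auto.
Qed.

Lemma passes_through_le x bs v :
  passes_through x bs v -> le_pt x v /\ le_pt v (endp x bs).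
Proof.
  intros (bs1 & bs2 & -> & <-). rewrite endp_app. split; apply le_pt_endp.
Qed.

(* Discrete intermediate value theorem: [fst] of the first path minus [fst] of the
   second changes by at most one per step and changes sign. *)
Lemma up_right_paths_meet x bs x' bs' :
  level x = level x' -> (fst x <= fst x')%Z ->
  level (endp x bs) = level (endp x' bs') -> (fst (endp x' bs') <= fst (endp x bs))%Z ->
  exists v, passes_through x bs v /\ passes_through x' bs' v.
Proof.
  revert x x' bs'; induction bs as [|b bs IH]; intros x x' bs' Hx Hfx Hy Hfy.
  all: destruct (Z.eq_dec (fst x) (fst x')) as [Heq|Hlt];
    [ assert (x' = x) as -> by (unfold level in Hx; destruct x, x'; simpl in *; f_equal; lia);
      exists x; split; apply passes_through_start |].
  all: pose proof (level_endp x' bs') as Ey'; rewrite Ey', level_endp in Hy.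
  - destruct bs' as [|b' bs']; simpl in *; lia.
  - destruct bs' as [|b' bs']; [simpl in *; lia|].
    destruct (IH (step x b) (step x' b') bs') as (v & Hv & Hv'); auto.
    + unfold level in *; destruct b, b'; simpl; lia.
    + unfold level in *; destruct b, b'; simpl; lia.
    + rewrite !level_endp. unfold level in *; destruct b, b'; simpl in *; lia.
    + exists v. split; apply (passes_through_app _ [_]); auto.
Qed.

Lemma up_right_paths_meet_through x bs u x' bs' u' :
  passes_through x bs u -> passes_through x' bs' u' ->
  level u = level u' -> (fst u <= fst u')%Z ->
  level (endp x bs) = level (endp x' bs') -> (fst (endp x' bs') <= fst (endp x bs))%Z ->
  exists v, passes_through x bs v /\ passes_through x' bs' v.
Proof.
  intros (bs1 & bs2 & -> & <-) (bs1' & bs2' & -> & <-). rewrite !endp_app.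
  intros Hu Hfu Hy Hfy.
  destruct (up_right_paths_meet _ bs2 _ bs2' Hu Hfu Hy Hfy) as (v & Hv & Hv').
  exists v. split; apply passes_through_app; auto.
Qed.

Lemma list_max_upper l y : In y l -> y <= list_max l.
Proof.
  destruct l as [|a l]; [intros []|]. simpl.
  induction l as [|c l IH]; simpl; intros H.
  - destruct H as [->|[]]; lra.
  - destruct H as [->|[->|H]].
    + eapply Rle_trans; [apply IH; simpl; auto|apply Rmax_r].
    + apply Rmax_l.
    + eapply Rle_trans; [apply IH; simpl; auto|apply Rmax_r].
Qed.

Lemma list_max_in l : l <> [] -> In (list_max l) l.
Proof.
  destruct l as [|a l]; [congruence|]. intros _. simpl.
  induction l as [|c l IH]; simpl; auto.
  destruct (Rle_dec c (fold_right Rmax a l)).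
  - rewrite Rmax_right by lra. simpl in IH. tauto.
  - rewrite Rmax_left by lra. simpl; tauto.
Qed.

Lemma list_maxZ_in l : l <> [] -> In (list_maxZ l) l.
Proof.
  destruct l as [|a l]; [congruence|]. intros _. simpl.
  induction l as [|c l IH]; simpl; auto.
  destruct (Z.max_dec c (fold_right Z.max a l)) as [->| ->]; simpl in *; tauto.
Qed.

Lemma in_all_bl bs : In bs (all_bl (length bs)).
Proof.
  induction bs as [|b bs IH]; simpl; auto.
  apply in_or_app. destruct b; [left|right]; apply in_map; auto.
Qed.

Lemma pt_eqb_eq p q : pt_eqb p q = true <-> p = q.
Proof.
  destruct p, q; unfold pt_eqb; simpl. rewrite andb_true_iff, !Z.eqb_eq.
  split; [intros [-> ->]; auto | intros H; inversion H; auto].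
Qed.

Lemma in_up_right_paths x y bs : In bs (up_right_paths x y) <-> endp x bs = y.
Proof.
  unfold up_right_paths. rewrite filter_In, pt_eqb_eq.
  split; [tauto|]. intros Hy. split; auto.
  pose proof (level_endp x bs) as E. rewrite Hy in E. unfold level in E.
  replace (Z.to_nat (fst y - fst x + (snd y - snd x))) with (length bs) by lia.
  apply in_all_bl.
Qed.

Lemma weight_le_L w x bs : weight w x bs <= L w x (endp x bs).
Proof. apply list_max_upper, in_map, in_up_right_paths. reflexivity. Qed.

Lemma L_attained w x y : le_pt x y -> exists bs, endp x bs = y /\ weight w x bs = L w x y.
Proof.
  intros Hxy. destruct (up_right_path_exists x y Hxy) as [bs0 H0].
  assert (Hne : map (weight w x) (up_right_paths x y) <> []).
  { intros E. pose proof (proj2 (in_up_right_paths x y bs0) H0) as Hin.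
    apply (in_map (weight w x)) in Hin. rewrite E in Hin. destruct Hin. }
  apply list_max_in, in_map_iff in Hne. destruct Hne as (bs & Hw & Hin).
  exists bs. split; [apply in_up_right_paths|]; auto.
Qed.

(* Exchanging the tails at a common vertex. *)
Lemma L_quadrangle w x bs x' bs' v :
  passes_through x bs v -> passes_through x' bs' v ->
  weight w x bs + weight w x' bs' <= L w x (endp x' bs') + L w x' (endp x bs).
Proof.
  intros (b1 & b2 & -> & Hv) (b1' & b2' & -> & Hv').
  pose proof (weight_le_L w x (b1 ++ b2')) as H1.
  pose proof (weight_le_L w x' (b1' ++ b2)) as H2.
  rewrite !endp_app, !weight_app in *. rewrite Hv, Hv' in *. lra.
Qed.

Lemma L_geodesic_quadrangle w x y bs x' y' bs' v :
  is_geodesic w x y bs -> is_geodesic w x' y' bs' ->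
  passes_through x bs v -> passes_through x' bs' v ->
  L w x y + L w x' y' <= L w x y' + L w x' y.
Proof.
  intros [<- <-] [<- <-]. apply L_quadrangle.
Qed.

Lemma in_feasible m n k i : In i (feasible m n k) <-> le_pt (diag m i) (diag n k).
Proof.
  unfold feasible, zrange. rewrite filter_In, in_map_iff.
  unfold le_ptb, le_pt, diag; simpl. rewrite andb_true_iff, !Z.leb_le.
  split.
  - intros [(t & <- & Ht) H]. apply in_seq in Ht. lia.
  - intros H. split; [|lia]. exists (Z.to_nat (i - (k - (n - m)))).
    split; [lia|]. apply in_seq. lia.
Qed.

Lemma Rrho_val_le_Lrho w s m n k i :
  le_pt (diag m i) (diag n k) -> Rrho_val w s m n k i <= Lrho w s m n k.
Proof. intros H. apply list_max_upper, in_map, in_feasible, H. Qed.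

Lemma Reqb_eq a b : Reqb a b = true <-> a = b.
Proof. unfold Reqb. destruct (Req_EM_T a b); split; congruence. Qed.

Lemma Zrho_spec w s m n k : (m <= n)%Z ->
  le_pt (diag m (Zrho w s m n k)) (diag n k) /\
  Rrho_val w s m n k (Zrho w s m n k) = Lrho w s m n k.
Proof.
  intros Hmn.
  set (maximizers := filter (fun i => Reqb (Rrho_val w s m n k i) (Lrho w s m n k))
                            (feasible m n k)).
  assert (Hk : In k (feasible m n k)) by (apply in_feasible; unfold le_pt, diag; simpl; lia).
  assert (Hne : map (Rrho_val w s m n k) (feasible m n k) <> []).
  { destruct (feasible m n k); [destruct Hk|discriminate]. }
  apply list_max_in, in_map_iff in Hne. destruct Hne as (i & Hi & Hif).
  assert (Hin : In (Zrho w s m n k) maximizers).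
  { apply list_maxZ_in. intros E.
    assert (Hmax : In i maximizers) by (apply filter_In; split; [|apply Reqb_eq]; auto).
    rewrite E in Hmax. destruct Hmax. }
  apply filter_In in Hin. destruct Hin as [Hz Heq].
  split; [apply in_feasible | apply Reqb_eq]; auto.
Qed.

Lemma Lrho_increment_ge w s m n k l i :
  Rrho_val w s m n k i = Lrho w s m n k -> le_pt (diag m i) (diag n l) ->
  L w (diag m i) (diag n l) - L w (diag m i) (diag n k) <= Lrho w s m n l - Lrho w s m n k.
Proof.
  intros Hopt Hl. pose proof (Rrho_val_le_Lrho w s m n l i Hl) as H.
  unfold Rrho_val in *. lra.
Qed.

Theorem lemma7 (w : Z -> Z -> R) (s : Z -> R) (hs0 : s 0%Z = 0)
  (n : Z) (hn : (1 <= n)%Z) (j k l : Z) (hkl : (k <= l)%Z)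
  (hjk : le_pt (diag 0 j) (diag n k)) (hjl : le_pt (diag 0 j) (diag n l)) :
  let m := (n / 2)%Z in
  (forall (bs : list bool) (z : Z),
      is_geodesic w (diag 0 j) (diag n l) bs ->
      (forall bs', is_geodesic w (diag 0 j) (diag n l) bs' -> bs' = bs) ->
      In (diag m z) (diag 0 j :: pts (diag 0 j) bs) ->
      (z <= Zrho w s m n k)%Z ->
      Lj w j (diag n l) - Lj w j (diag n k) <= Lrho w s m n l - Lrho w s m n k)
  /\
  (forall (bs : list bool) (z : Z),
      is_geodesic w (diag 0 j) (diag n k) bs ->
      (forall bs', is_geodesic w (diag 0 j) (diag n k) bs' -> bs' = bs) ->
      In (diag m z) (diag 0 j :: pts (diag 0 j) bs) ->
      (Zrho w s m n l <= z)%Z ->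
      Lrho w s m n l - Lrho w s m n k <= Lj w j (diag n l) - Lj w j (diag n k)).
Proof.
  intros m.
  assert (Hm : (m <= n)%Z) by (apply Z.div_le_upper_bound; lia).
  split; intros bs z Hgeo _ Hin Hz; pose proof Hgeo as [Hend _];
    apply in_pts_passes_through in Hin; unfold Lj.
  - destruct (Zrho_spec w s m n k Hm) as [Hfeas Hopt].
    set (i := Zrho w s m n k) in *.
    destruct (L_attained w _ _ Hfeas) as (q & Hq & Hqw).
    destruct (up_right_paths_meet_through _ _ _ (diag m i) q _ Hin (passes_through_start _ q))
      as (v & Hv & Hv'); try (rewrite ?Hend, ?Hq; unfold level, diag; simpl; lia).
    pose proof (L_geodesic_quadrangle w _ _ _ _ _ q v Hgeo (conj Hq Hqw) Hv Hv') as Hquad.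
    pose proof (passes_through_le _ _ _ Hv') as [Hiv _].
    pose proof (passes_through_le _ _ _ Hv) as [_ Hvl]. rewrite Hend in Hvl.
    pose proof (Lrho_increment_ge w s m n k l i Hopt (le_pt_trans _ _ _ Hiv Hvl)) as Hincr.
    lra.
  - destruct (Zrho_spec w s m n l Hm) as [Hfeas Hopt].
    set (i := Zrho w s m n l) in *.
    destruct (L_attained w _ _ Hfeas) as (q & Hq & Hqw).
    destruct (up_right_paths_meet_through (diag m i) q _ _ _ _ (passes_through_start _ q) Hin)
      as (v & Hv & Hv'); try (rewrite ?Hend, ?Hq; unfold level, diag; simpl; lia).
    pose proof (L_geodesic_quadrangle w _ _ _ _ _ bs v (conj Hq Hqw) Hgeo Hv Hv') as Hquad.
    pose proof (passes_through_le _ _ _ Hv) as [Hiv _].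
    pose proof (passes_through_le _ _ _ Hv') as [_ Hvk]. rewrite Hend in Hvk.
    pose proof (Lrho_increment_ge w s m n l k i Hopt (le_pt_trans _ _ _ Hiv Hvk)) as Hincr.
    lra.
Qed.
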